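(* In the setting below ($\bar{\mathbf Q}=\mathbf Q+\mathbf\Delta$), the matrices $\mathbf Q$ and $\mathbf\Delta$ are uniquely determined by $\bar{\mathbf Q}$. More precisely: for every $i\in[d]$ and $m$-subset $\mathcal I\subseteq[d]$ with $i>\max\mathcal I$, $i\notin\mathcal B$ and $\mathcal I\cap\mathcal B=\varnothing$, $$\mathbf Q_{i,\mathcal I}=(-1)^{\sigma_Q(i)+m}\sum_{t\in\mathcal I}(-1)^{\sigma_Q(t)+\mathrm{ind}_{\mathcal I}(t)}\,\bar{\mathbf Q}_{t,(\mathcal I\cup\{i\})\setminus\{t\}},$$ and $\mathbf\Delta_{i,\mathcal I}=\bar{\mathbf Q}_{i,\mathcal I}-\mathbf Q_{i,\mathcal I}$; for all other positions $(i,\mathcal I)$, $\mathbf\Delta_{i,\mathcal I}=0$ and $\mathbf Q_{i,\mathcal I}=\bar{\mathbf Q}_{i,\mathcal I}$.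
   Context: Notation: $[d]=\{1,\dots,d\}$; $\mathrm{ind}_{\mathcal I}(x)=|\{y\in\mathcal I:y\le x\}|$; $\max\varnothing=-\infty$. Setting: $\mathbb F$ a field, $d\ge1$, $j\ge1$, $\mathcal B\subseteq[d]$ with $|\mathcal B|\le j-1$, $m=j-|\mathcal B|-1$, $x\in[d]$, $\sigma_P\in\mathbb Z^d$, $\mathbf P$ an arbitrary matrix over $\mathbb F$ with rows $[d]$ and columns the $j$-subsets of $[d]$, $\sigma_Q(i)=1+\sigma_P(i)+\mathrm{ind}_{\mathcal B\cup\{i\}}(i)$. $\mathbf Q$ is a $(d;m)$ signed determinant message matrix with signature $\sigma_Q$: choose $v_{x,\mathcal X}\in\mathbb F$ for every $m$-subset $\mathcal X\subseteq[d]$, $x\in\mathcal X$, and $w_{y,\mathcal Y}\in\mathbb F$ for every $(m+1)$-subset $\mathcal Y\subseteq[d]$, $y\in\mathcal Y$, with $\sum_{y\in\mathcal Y}(-1)^{\mathrm{ind}_{\mathcal Y}(y)}w_{y,\mathcal Y}=0$; then $\mathbf Q_{x,\mathcal I}=(-1)^{\sigma_Q(x)}v_{x,\mathcal I}$ if $x\in\mathcal I$ and $(-1)^{\sigma_Q(x)}w_{x,\mathcal I\cup\{x\}}$ if $x\notin\mathcal I$, rows $x\in[d]$, columns $m$-subsets $\mathcal I$ (for $m=0$, the all-zero column indexed by $\varnothing$). $\mathbf\Delta$: rows $i\in[d]$, columns $m$-subsets $\mathcal I$, $\mathbf\Delta_{i,\mathcal I}=(-1)^{1+\sigma_P(i)+\mathrm{ind}_{\mathcal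 I\cup\{i\}\cup\mathcal B}(i)}\mathbf P_{x,\mathcal I\cup\{i\}\cup\mathcal B}$ if $i>\max\mathcal I$, $i\notin\mathcal B$, $\mathcal I\cap\mathcal B=\varnothing$, and $0$ otherwise. *)

(* [d] = {1..d} is modelled by 'I_d (values 0..d-1, same order). *)
From HB Require Import structures.
From mathcomp Require Import all_boot all_order all_algebra.
Set Implicit Arguments. Unset Strict Implicit. Unset Printing Implicit Defensive.
Import Order.TTheory GRing.Theory Num.Theory.
Local Open Scope ring_scope.

Definition sgnz (F : fieldType) (z : int) : F := (-1) ^ z.

Definition ind d (I : {set 'I_d}) (x : 'I_d) : nat :=
  #|[set y in I | (val y <= val x)%N]|.

Definition gt_max d (i : 'I_d) (I : {set 'I_d}) : bool :=
  [forall y in I, (val y < val i)%N].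

(* A matrix with rows [d] and columns indexed by subsets of [d]
   (only columns of the relevant cardinality are meaningful). *)
Definition setmx (F : fieldType) d := 'I_d -> {set 'I_d} -> F.

Definition signed_det_msg_mx (F : fieldType) d (m : nat) (sigma : 'I_d -> int)
    (Q : setmx F d) : Prop :=
  exists (v w : 'I_d -> {set 'I_d} -> F),
    (forall Y : {set 'I_d}, #|Y| = m.+1 ->
       \sum_(y in Y) sgnz F (ind Y y) * w y Y = 0) /\
    (forall (x : 'I_d) (I : {set 'I_d}), #|I| = m ->
       Q x I = sgnz F (sigma x) * (if x \in I then v x I else w x (x |: I))).

Definition sigmaQ d (B : {set 'I_d}) (sigmaP : 'I_d -> int) (i : 'I_d) : int :=
  1 + sigmaP i + (ind (B :|: [set i]) i)%:Z.

Definition delta_pos d (B : {set 'I_d}) (i : 'I_d) (I : {set 'I_d}) : bool :=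
  [&& gt_max i I, i \notin B & [disjoint I & B]].

Definition Delta (F : fieldType) d (B : {set 'I_d}) (x : 'I_d)
    (sigmaP : 'I_d -> int) (P : setmx F d) : setmx F d :=
  fun i I =>
    if delta_pos B i I then
      sgnz F (1 + sigmaP i + (ind (I :|: [set i] :|: B) i)%:Z)
        * P x (I :|: [set i] :|: B)
    else 0.

(* Write Y = I u {i}. Since i > max I, the index of every t in I within Y is
   its index within I, i has index m + 1 in Y, and Delta vanishes at every
   position (t, Y \ t) with t in I because i lies in Y \ t. The vanishing
   alternating sum of the w's over Y, rewritten in terms of Q, therefore
   expresses Q_{i,I} through the entries Qbar_{t, Y \ t} = Q_{t, Y \ t}. *)
From mathcomp Require Import all_boot all_order all_algebra.
Set Implicit Arguments. Unset Strict Implicit. Unset Printing Implicit Defensive.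
Import GRing.Theory.
Local Open Scope ring_scope.

Lemma sgnzD (F : fieldType) (a b : int) : sgnz F (a + b) = sgnz F a * sgnz F b.
Proof. by rewrite /sgnz expfzDr // oppr_eq0 oner_eq0. Qed.

Lemma sgnzS (F : fieldType) (a : int) : sgnz F (a + 1) = - sgnz F a.
Proof. by rewrite sgnzD /sgnz expr1z mulrN1. Qed.

Lemma sgnz_sqr (F : fieldType) (a : int) : sgnz F a * sgnz F a = 1.
Proof.
by rewrite -sgnzD /sgnz -mulr2z -mulrzl -exprz_exp intz -exprnP sqrrN expr1n exp1rz.
Qed.

Section IndexOfSetU1Max.

Context {d : nat} {i : 'I_d} {I : {set 'I_d}}.
Hypothesis gt_iI : gt_max i I.

Lemma gt_maxP t : t \in I -> (val t < val i)%N.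
Proof. exact: (implyP (forallP gt_iI t)). Qed.

Lemma notin_gt_max : i \notin I.
Proof. by apply/negP => /gt_maxP; rewrite ltnn. Qed.

Lemma ind_setU1_gt_max t : t \in I -> ind (i |: I) t = ind I t.
Proof.
move=> tI; apply: eq_card => y; rewrite !inE.
by case: eqP => [->|_] //=; rewrite (negbTE notin_gt_max) leqNgt gt_maxP.
Qed.

Lemma ind_setU1_max : ind (i |: I) i = #|I|.+1.
Proof.
rewrite (_ : #|I|.+1 = #|i |: I|); last by rewrite cardsU1 notin_gt_max.
apply: eq_card => y; rewrite !inE.
case: eqP => [->|_] /=; first exact: leqnn.
by case yI: (y \in I); rewrite //= ltnW ?gt_maxP.
Qed.

End IndexOfSetU1Max.

Lemma signed_det_msg_alt (F : fieldType) d m (sigma : 'I_d -> int)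
    (Q : setmx F d) :
  signed_det_msg_mx m sigma Q ->
  forall Y : {set 'I_d}, #|Y| = m.+1 ->
  \sum_(t in Y) sgnz F (sigma t + (ind Y t)%:Z) * Q t (Y :\ t) = 0.
Proof.
move=> [v [w [alt_w defQ]]] Y cardY; rewrite -[RHS](alt_w Y cardY).
apply: eq_bigr => t tY.
have cardYt : #|Y :\ t| = m by apply/eq_add_S; rewrite -cardY (cardsD1 t Y) tY.
by rewrite defQ // setD11 setD1K // sgnzD mulrACA sgnz_sqr mul1r.
Qed.

Lemma Delta_eq0 (F : fieldType) d (B : {set 'I_d}) x sigmaP (P : setmx F d)
    i I : ~~ delta_pos B i I -> Delta B x sigmaP P i I = 0.
Proof. by rewrite /Delta => /negbTE ->. Qed.

Lemma delta_pos_setD1 d (B : {set 'I_d}) (i t : 'I_d) (I : {set 'I_d}) :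
  gt_max i I -> t \in I -> ~~ delta_pos B t ((i |: I) :\ t).
Proof.
move=> gt_iI tI; apply/negP => /and3P [gt_t _ _].
have iYt : i \in (i |: I) :\ t.
  by rewrite !inE eqxx andbT; apply: contraTneq tI => <-; exact: notin_gt_max gt_iI.
by have := gt_maxP gt_t iYt; rewrite ltnNge (ltnW (gt_maxP gt_iI tI)).
Qed.

Theorem lemma2 (F : fieldType) (d j : nat) (B : {set 'I_d}) (x : 'I_d)
    (sigmaP : 'I_d -> int) (P : 'I_d -> {set 'I_d} -> F)
    (Q : 'I_d -> {set 'I_d} -> F) :
  (1 <= d)%N -> (1 <= j)%N -> (#|B| <= j - 1)%N ->
  let m := (j - #|B| - 1)%N in
  signed_det_msg_mx m (sigmaQ B sigmaP) Q ->
  let Qbar := fun i I => Q i I + Delta B x sigmaP P i I in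
  forall (i : 'I_d) (I : {set 'I_d}), #|I| = m ->
    (delta_pos B i I ->
       Q i I = sgnz F (sigmaQ B sigmaP i + m%:Z) *
         \sum_(t in I) sgnz F (sigmaQ B sigmaP t + (ind I t)%:Z)
                         * Qbar t ((I :|: [set i]) :\ t)
       /\ Delta B x sigmaP P i I = Qbar i I - Q i I) /\
    (~~ delta_pos B i I ->
       Delta B x sigmaP P i I = 0 /\ Q i I = Qbar i I).
Proof.
move=> _ _ _ m sdQ Qbar i I cardI; rewrite /Qbar.
split=> [pos_iI|not_pos_iI]; last by rewrite Delta_eq0 ?addr0.
split; last by rewrite addrAC subrr add0r.
have /and3P [gt_iI _ _] := pos_iI.
have iI := notin_gt_max gt_iI.
have cardY : #|i |: I| = m.+1 by rewrite cardsU1 iI cardI.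
have := signed_det_msg_alt sdQ cardY.
rewrite big_setU1 //= setU1K // ind_setU1_max // cardI -addn1 PoszD addrA sgnzS.
move/eqP; rewrite addrC addr_eq0 => /eqP alt.
rewrite setUC; under eq_bigr => t tI.
  rewrite Delta_eq0 ?delta_pos_setD1 // addr0 -(ind_setU1_gt_max gt_iI tI).
  over.
by rewrite alt mulNr opprK mulrA sgnz_sqr mul1r.
Qed.
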